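(* Let $\omega\in(0,\pi/2]$ and let $S$ be a moving sofa with rotation angle $\omega$ in standard position. Let $K=\mathcal{C}(S)$. Then $\mathcal{M}(S)=K\setminus\mathcal{N}(K)$.
   Context: For $t\in\mathbb{R}$ put $u_t=(\cos t,\sin t)$, $v_t=(-\sin t,\cos t)$; $R_t$ is counterclockwise rotation about the origin by $t$. For nonempty compact $X$, $p_X(t)=\max_{p\in X}p\cdot u_t$; $H(t,h)=\{p:p\cdot u_t\le h\}$. The hallway is $L=L_H\cup L_V$, $L_H=(-\infty,1]\times[0,1]$, $L_V=[0,1]\times(-\infty,1]$. A moving sofa is a connected, nonempty, compact $S\subset\mathbb{R}^2$ such that some translate of $S$ lies in $L_H$ and can be moved by a continuous rigid motion inside $L$ to a subset of $L_V$; its rotation angle $\omega\in(0,\pi/2]$ is the total clockwise angle rotated (fixed data of the sofa). It is in standard position if $p_S(\omega)=p_S(\pi/2)=1$. Let $H=\mathbb{R}\times[0,1]$, $V=[0,1]\times\mathbb{R}$, $P_\omega=H\cap R_\omega(V)$. For nonempty compact $X$ define $L_X(t)=R_t(L)+(p_X(t)-1)u_t+(p_X(t+\pi/2)-1)v_t$, $Q_X^+(t)=H(t,p_X(t))\cap H(t+\pi/2,p_X(t+\pi/2))$, $Q_X^-(t)=\{p:p\cdot u_t<p_X(t)-1,\ p\cdot v_t<p_X(t+\pi/2)-1\}$. Monotonization: $\mathcal{M}(S)=P_\omega\cap\bigcap_{0\le t\le\omega}L_S(t)$. Cap of $S$: $\mathcal{C}(S)=P_\omega\cap\bigcap_{0\le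 t\le\omega}Q_S^+(t)$. Fan: $F_\omega=\{(x,y):y\ge0,\ x\cos\omega+y\sin\omega\ge0\}$. Niche of a compact convex $K$ (relative to $\omega$): $\mathcal{N}(K)=F_\omega\cap\bigcup_{0\le t\le\omega}Q_K^-(t)$. *)

From HB Require Import structures.
From mathcomp Require Import all_boot all_order all_algebra.
From mathcomp Require Import all_classical all_reals.
From mathcomp Require Import topology normedtype trigo.
Set Implicit Arguments. Unset Strict Implicit. Unset Printing Implicit Defensive.
Import Order.TTheory GRing.Theory Num.Theory.
Import numFieldTopology.Exports numFieldNormedType.Exports.
Local Open Scope classical_set_scope.
Local Open Scope ring_scope.

Section Sofa.
Variable R : realType.
Notation pt := (R * R)%type.

Definition u (t : R) : pt := (cos t, sin t).
Definition v (t : R) : pt := (- sin t, cos t).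
Definition dot (p q : pt) : R := p.1 * q.1 + p.2 * q.2.
Definition padd (p q : pt) : pt := (p.1 + q.1, p.2 + q.2).
Definition pscale (a : R) (p : pt) : pt := (a * p.1, a * p.2).

Definition rot (t : R) (p : pt) : pt :=
  (cos t * p.1 - sin t * p.2, sin t * p.1 + cos t * p.2).

(* support function p_X(t) = max_{p in X} p . u_t (a sup, which is a max for
   nonempty compact X) *)
Definition supp (X : set pt) (t : R) : R := sup [set dot p (u t) | p in X].

Definition halfplane (t h : R) : set pt := [set p | dot p (u t) <= h].

Definition LH : set pt := [set p | p.1 <= 1 /\ 0 <= p.2 <= 1].
Definition LV : set pt := [set p | 0 <= p.1 <= 1 /\ p.2 <= 1].
Definition hallway : set pt := LH `|` LV.

(* A continuous rigid motion s |-> (p |-> rot (- theta s) p + c s), s in [0,1],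
   starting as a pure translation (theta 0 = 0) and having rotated clockwise by
   the total angle w at the end (theta 1 = w). *)
Definition unit_interval : set R := [set s | 0 <= s <= 1].
Definition motion (theta : R -> R) (c : R -> pt) (s : R) (p : pt) : pt :=
  padd (rot (- theta s) p) (c s).

Definition moving_sofa (w : R) (S : set pt) : Prop :=
  connected S /\ S !=set0 /\ compact S /\
  exists (theta : R -> R) (c : R -> pt),
    {within unit_interval, continuous theta} /\
    {within unit_interval, continuous c} /\
    theta 0 = 0 /\ theta 1 = w /\
    motion theta c 0 @` S `<=` LH /\
    (forall s, 0 <= s <= 1 -> motion theta c s @` S `<=` hallway) /\
    motion theta c 1 @` S `<=` LV.

Definition standard_position (w : R) (S : set pt) : Prop :=
  supp S w = 1 /\ supp S (pi / 2) = 1.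

Definition Hstrip : set pt := [set p | 0 <= p.2 <= 1].
Definition Vstrip : set pt := [set p | 0 <= p.1 <= 1].
Definition Pw (w : R) : set pt := Hstrip `&` (rot w @` Vstrip).

Definition LX (X : set pt) (t : R) : set pt :=
  [set padd (padd (rot t q) (pscale (supp X t - 1) (u t)))
            (pscale (supp X (t + pi / 2) - 1) (v t)) | q in hallway].

Definition QXp (X : set pt) (t : R) : set pt :=
  halfplane t (supp X t) `&` halfplane (t + pi / 2) (supp X (t + pi / 2)).

Definition QXm (X : set pt) (t : R) : set pt :=
  [set p | dot p (u t) < supp X t - 1 /\ dot p (v t) < supp X (t + pi / 2) - 1].

Definition monotonization (w : R) (S : set pt) : set pt :=
  Pw w `&` \bigcap_(t in [set t | 0 <= t <= w]) LX S t.

Definition cap (w : R) (S : set pt) : set pt :=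
  Pw w `&` \bigcap_(t in [set t | 0 <= t <= w]) QXp S t.

Definition fan (w : R) : set pt :=
  [set p | 0 <= p.2 /\ 0 <= p.1 * cos w + p.2 * sin w].

Definition niche (w : R) (K : set pt) : set pt :=
  fan w `&` \bigcup_(t in [set t | 0 <= t <= w]) QXm K t.

End Sofa.

(* The rotated hallway L_X(t) is exactly the closed quadrant Q^+_X(t) with the
   open inner quadrant Q^-_X(t) removed, so M(S) = P_w ∩ ⋂_t (Q^+_S(t) \ Q^-_S(t)).
   Standard position together with the two end positions of the motion puts S
   inside P_w, hence inside its cap K; as K is cut out by the supporting
   half-planes of S, the support functions of K and S agree on [0, w] and on
   [pi/2, w + pi/2], so Q^-_K(t) = Q^-_S(t).  Finally P_w lies in the fan, so
   removing the niche of K from K removes exactly the inner quadrants. *)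
From Pilot Require Import Defs.
From HB Require Import structures.
From mathcomp Require Import all_boot all_order all_algebra.
From mathcomp Require Import all_classical all_reals.
From mathcomp Require Import topology normedtype trigo.
From mathcomp Require Import ring lra.
Import Order.TTheory GRing.Theory Num.Theory.
Import numFieldTopology.Exports numFieldNormedType.Exports.
Local Open Scope classical_set_scope.
Local Open Scope ring_scope.

Set Implicit Arguments.
Unset Strict Implicit.
Unset Printing Implicit Defensive.

Section Sofa.
Variable R : realType.
Implicit Types (S X K : set (R * R)) (p q : R * R) (t w : R).

Lemma u_Dpihalf t : u (t + pi / 2) = v t.
Proof. by rewrite /u /v cosDpihalf sinDpihalf. Qed.

Lemma dot_u_pihalf p : dot p (u (pi / 2)) = p.2.
Proof. by rewrite /dot /u cos_pihalf sin_pihalf mulr0 mulr1 add0r. Qed.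

Lemma dot_rot_u t q : dot (Defs.rot t q) (u t) = q.1.
Proof.
rewrite /dot /Defs.rot /u /=.
by transitivity (q.1 * (cos t ^+ 2 + sin t ^+ 2)); [ring | rewrite cos2Dsin2 mulr1].
Qed.

Lemma dot_rot_v t q : dot (Defs.rot t q) (v t) = q.2.
Proof.
rewrite /dot /Defs.rot /v /=.
by transitivity (q.2 * (cos t ^+ 2 + sin t ^+ 2)); [ring | rewrite cos2Dsin2 mulr1].
Qed.

Lemma rot_coordK t p : Defs.rot t (dot p (u t), dot p (v t)) = p.
Proof.
case: p => x y; rewrite /dot /Defs.rot /u /v /=; congr pair.
  by transitivity (x * (cos t ^+ 2 + sin t ^+ 2)); [ring | rewrite cos2Dsin2 mulr1].
by transitivity (y * (cos t ^+ 2 + sin t ^+ 2)); [ring | rewrite cos2Dsin2 mulr1].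
Qed.

Lemma rot0 p : Defs.rot 0 p = p.
Proof. by case: p => x y; rewrite /Defs.rot /= cos0 sin0 !mul1r !mul0r subr0 add0r. Qed.

Lemma rotN_fst t p : (Defs.rot (- t) p).1 = dot p (u t).
Proof. by rewrite /Defs.rot /dot /u /= cosN sinN; ring. Qed.

Lemma rot_shift t q a b :
  padd (padd (Defs.rot t q) (pscale a (u t))) (pscale b (v t)) =
  Defs.rot t (q.1 + a, q.2 + b).
Proof. by rewrite /padd /pscale /Defs.rot /u /v /=; congr pair; ring. Qed.

Lemma hallwayE q :
  hallway q <-> (q.1 <= 1 /\ q.2 <= 1) /\ ~ (q.1 < 0 /\ q.2 < 0).
Proof.
split.
  by case=> [[? /andP[? ?]]|[/andP[? ?] ?]]; (split; [split | case]); lra.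
case=> -[q1 q2] nq; have [q1p|q1n] := leP 0 q.1.
  by right; split; first (apply/andP; split).
by left; split=> //; apply/andP; split=> //; rewrite leNgt; apply/negP => ?; apply: nq.
Qed.

Lemma LXE X t : LX X t = QXp X t `\` QXm X t.
Proof.
rewrite /QXp /QXm /halfplane u_Dpihalf.
apply/seteqP; split=> p /=.
  case=> q /hallwayE[[q1 q2] nq] <-.
  rewrite rot_shift dot_rot_u dot_rot_v /=.
  by split; [split | case=> ? ?; apply: nq; split]; lra.
case=> -[pu pv] np.
exists (dot p (u t) - (supp X t - 1), dot p (v t) - (supp X (t + pi / 2) - 1)).
  apply/hallwayE; rewrite /=; split; first by split; lra.
  by case=> pu1 pv1; apply: np; split; lra.
by rewrite rot_shift /= !subrK rot_coordK.
Qed.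

Section Support.
Variable S : set (R * R).
Hypotheses (cS : compact S) (S0 : S !=set0).

Lemma has_sup_dot t : has_sup [set dot p (u t) | p in S].
Proof.
have [p0 Sp0] := S0; split; first by exists (dot p0 (u t)), p0.
have [M [_ HM]] := compact_bounded cS.
exists (M + 1 + (M + 1)) => _ [p Sp <-].
have := HM (M + 1) (ltr_pwDr ltr01 (lexx M)) p Sp.
rewrite [X in X <= _ -> _]prod_normE ge_max => /andP[h1 h2].
apply: le_trans (ler_norm _) _; apply: le_trans (ler_normD _ _) _.
rewrite !normrM; apply: lerD.
  by rewrite -[leRHS]mulr1; apply: ler_pM => //; exact: cos_max.
by rewrite -[leRHS]mulr1; apply: ler_pM => //; exact: sin_max.
Qed.

Lemma supp_ge t p : S p -> dot p (u t) <= supp S t.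
Proof. by move=> Sp; apply: sup_upper_bound; [exact: has_sup_dot | exists p]. Qed.

Lemma supp_le t h : (forall p, S p -> dot p (u t) <= h) -> supp S t <= h.
Proof.
move=> Sh; have [p0 Sp0] := S0.
by apply: ge_sup; [exists (dot p0 (u t)), p0 | move=> _ [p Sp <-]; exact: Sh].
Qed.

Lemma supp1_translate_strip t c :
  supp S t = 1 -> (forall p, S p -> 0 <= dot p (u t) + c <= 1) ->
  forall p, S p -> 0 <= dot p (u t) <= 1.
Proof.
move=> St1 Sc.
have c_le0 : c <= 0.
  suff : supp S t <= 1 - c by rewrite St1; lra.
  by apply: supp_le => p /Sc; lra.
move=> p Sp; have := Sc p Sp; have := supp_ge t Sp; rewrite St1; lra.
Qed.

Lemma supp_eq_sub_halfplane K t :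
  S `<=` K -> K `<=` halfplane t (supp S t) -> supp K t = supp S t.
Proof.
move=> SK KH; have [p0 Sp0] := S0.
have K0 : [set dot p (u t) | p in K] !=set0 by exists (dot p0 (u t)), p0 => //; exact: SK.
have KS : forall x, [set dot p (u t) | p in K] x -> x <= supp S t.
  by move=> _ [p Kp <-]; exact: KH.
apply/le_anti/andP; split; first exact: ge_sup.
apply: sup_le.
- by move=> _ [p Sp <-]; exists (dot p (u t)); split=> //; exists p => //; exact: SK.
- by exists (dot p0 (u t)), p0.
- by split; last exists (supp S t).
Qed.

End Support.

Lemma mem_rot_image (A : set (R * R)) t p :
  A (dot p (u t), dot p (v t)) -> (Defs.rot t @` A) p.
Proof. by move=> Ap; exists (dot p (u t), dot p (v t)) => //; exact: rot_coordK. Qed.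

Lemma Pw_sub_fan w : Pw w `<=` fan w.
Proof.
move=> p [/andP[p2 _] [q /andP[q1 _] qp]]; split=> //.
by have := dot_rot_u w q; rewrite qp /dot /u /= => ->.
Qed.

Lemma sofa_sub_Pw w S : moving_sofa w S -> standard_position w S -> S `<=` Pw w.
Proof.
move=> [_ [S0 [cS [th [c [_ [_ [th0 [th1 [H0 [_ H1]]]]]]]]]]] [Sw Spi].
have start p : S p -> 0 <= dot p (u (pi / 2)) + (c 0).2 <= 1.
  move=> Sp; have [_] : LH (motion th c 0 p) by apply: H0; exists p.
  by rewrite /motion th0 oppr0 rot0 dot_u_pihalf.
have stop p : S p -> 0 <= dot p (u w) + (c 1).1 <= 1.
  move=> Sp; have [+ _] : LV (motion th c 1 p) by apply: H1; exists p.
  by rewrite /motion th1 /padd rotN_fst.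
move=> p Sp; split.
  by have := supp1_translate_strip cS S0 Spi start Sp; rewrite dot_u_pihalf.
exact/mem_rot_image/(supp1_translate_strip cS S0 Sw stop).
Qed.

Section Cap.
Variables (w : R) (S : set (R * R)).
Hypotheses (cS : compact S) (S0 : S !=set0) (SP : S `<=` Pw w).

Lemma sofa_sub_cap : S `<=` cap w S.
Proof. by move=> p Sp; split; [exact: SP | move=> t _; split; exact: supp_ge]. Qed.

Lemma QXm_cap t : 0 <= t <= w -> QXm (cap w S) t = QXm S t.
Proof.
move=> tI; have capQ : cap w S `<=` QXp S t by move=> p [_]; apply.
rewrite /QXm !(supp_eq_sub_halfplane S0 sofa_sub_cap) //.
- by move=> p /capQ[].
- by move=> p /capQ[].
Qed.

End Cap.

End Sofa.

Theorem theorem3p12 (R : realType) (w : R) (S : set (R * R)) :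
  0 < w <= pi / 2 ->
  moving_sofa w S ->
  standard_position w S ->
  monotonization w S = cap w S `\` niche w (cap w S).
Proof.
(* The identity holds for every rotation angle. *)
move=> _ sofa std; have SP := sofa_sub_Pw sofa std.
have [_ [S0 [cS _]]] := sofa.
have QmE := QXm_cap cS S0 SP.
apply/seteqP; split=> p.
  move=> [Pp Lp]; split.
    by split=> // t tI; have := Lp t tI; rewrite LXE => -[].
  by move=> [_ [t tI]]; rewrite QmE //; have := Lp t tI; rewrite LXE => -[_ /[apply]].
move=> [[Pp Qp] Np]; split=> // t tI; rewrite LXE; split; first exact: Qp.
move=> Qm; apply: Np; split; first exact: Pw_sub_fan.
by exists t; rewrite // QmE.
Qed.
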